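(* Let $p$ be a prime and $n\ge 1$. Among all finite abelian groups that contain a subgroup isomorphic to each abelian group of order $p^n$, there is a unique one of smallest order up to isomorphism, and its order is $p^{f(n)}$, where $f(n)=\sum_{k=1}^n\lfloor n/k\rfloor$. Explicitly, it is $\mathbb{Z}_{p^{\lfloor n/1\rfloor}}\times\mathbb{Z}_{p^{\lfloor n/2\rfloor}}\times\cdots\times\mathbb{Z}_{p^{\lfloor n/n\rfloor}}$. *)

From HB Require Import structures.
From mathcomp Require Import all_boot all_order all_algebra all_fingroup.
Set Implicit Arguments. Unset Strict Implicit. Unset Printing Implicit Defensive.
Import GRing.Theory.

Definition f (n : nat) : nat := \sum_(1 <= k < n.+1) n %/ k.

Definition amb (p n : nat) : finGroupType := 'rV['Z_(p ^ n)]_n.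

(* The group Z_{p^{n/1}} x Z_{p^{n/2}} x ... x Z_{p^{n/n}}, realised inside
   (Z/p^nZ)^n: the k-th coordinate (k = 1..n, index k-1) ranges over the
   cyclic subgroup p^(n - n/k) Z / p^n Z, which has order p^(n/k). *)
Definition Uset (p n : nat) : {set amb p n} :=
  [set v : amb p n | [forall k : 'I_n, p ^ (n - n %/ k.+1) %| v ord0 k]].

Definition universal (p n : nat) (gT : finGroupType) (G : {set gT}) : Prop :=
  forall (hT : finGroupType) (H : {group hT}), abelian H -> #|H| = (p ^ n)%N ->
    exists K : {group gT}, K \subset G /\ (K \isog H).

From mathcomp Require Import all_boot all_order all_algebra all_fingroup all_solvable.
From mathcomp Require Import zify.
Set Implicit Arguments. Unset Strict Implicit. Unset Printing Implicit Defensive.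

(* For an abelian p-group P, the numbers r_j(P) = log_p |Ohm_(j+1)(P) : Ohm_j(P)|
   (layer_rank j P) count the cyclic factors of P of order > p^j; they determine P up to
   isomorphism, they do not decrease when passing from a subgroup to P, and
   their sum over j < m is log_p |Ohm_m(P)|.
   U = Z/p^(n/1) x ... x Z/p^(n/n) is universal because the k-th largest cyclic
   factor of an abelian group of order p^n has order at most p^(n/k).
   Conversely, a universal abelian G contains (Z/p^(j+1))^(n/(j+1)), padded to
   order p^n, so its p-core P has r_j(P) >= n/(j+1) = r_j(U) for j < n; summing
   gives |G| >= |P| >= p^f(n) = |U|, and if |G| = |U| all these inequalities
   are equalities and r_j(P) = 0 for j >= n, whence G = P is isomorphic to U. *)

Lemma count_gtn_split (s : seq nat) e :
  count (fun m => e < m) s = count_mem e.+1 s + count (fun m => e.+1 < m) s.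
Proof. by elim: s => //= m s ->; case: (ltngtP m e.+1) => ?; lia. Qed.

Lemma perm_eq_count_gtn (s1 s2 : seq nat) : all (leq 1) s1 -> all (leq 1) s2 ->
  (forall j, count (fun m => j < m) s1 = count (fun m => j < m) s2) -> perm_eq s1 s2.
Proof.
move=> pos1 pos2 eq_gt; apply/allP => -[|e] _ /=.
  have no0 s : all (leq 1) s -> count_mem 0 s = 0.
    by move=> pos; rewrite (eq_in_count (a2 := pred0)) ?count_pred0 // => -[] // /(allP pos).
  by rewrite !no0.
by have := count_gtn_split s1 e; rewrite eq_gt eq_gt count_gtn_split => /addIn ->.
Qed.

Lemma sum_ord_ltn q m : \sum_(k < m) (k < q) = minn q m.
Proof.
elim: m => [|m IHm]; first by rewrite big_ord0 minn0.
by rewrite big_ord_recr /= IHm; case: (ltnP m q) => ?; lia.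
Qed.

Lemma sum_nth_count (T : Type) (a : pred T) x0 (s : seq T) m :
  a x0 = false -> size s <= m -> \sum_(k < m) a (nth x0 s k) = count a s.
Proof.
move=> a_x0; elim: s m => [|x s IHs] m le_sm.
  by rewrite big1 // => k _; rewrite nth_nil a_x0.
by case: m le_sm => // m le_sm; rewrite big_ord_recl /= IHs.
Qed.

Lemma card_dvdn_ord m d : d %| m -> 0 < d -> #|[pred x : 'I_m | d %| x]| = m %/ d.
Proof.
move=> dvd_dm d_gt0.
have lt_m (i : 'I_(m %/ d)) : i * d < m.
  by rewrite -[X in _ < X](divnK dvd_dm) ltn_mul2r d_gt0 ltn_ord.
rewrite -[m %/ d]card_ord -(card_imset _ (_ : injective (fun i => Ordinal (lt_m i)))).
  apply: eq_card => x; rewrite inE /=; apply/idP/imsetP => [dvd_dx|[i _ ->]].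
    have lt_x : x %/ d < m %/ d by rewrite ltn_divLR // divnK.
    by exists (Ordinal lt_x) => //; apply/val_inj; rewrite /= divnK.
  by rewrite /= dvdn_mull.
by move=> i j /(congr1 val)/eqP; rewrite /= eqn_pmul2r // => /eqP/val_inj.
Qed.

Lemma dvdn_mul_pexp p n i x : 0 < p -> (p ^ n %| x * p ^ i) = (p ^ (n - i) %| x).
Proof.
move=> p_gt0; case: (leqP i n) => [le_in|lt_ni].
  by rewrite -{1}(subnK le_in) expnD dvdn_pmul2r ?expn_gt0 ?p_gt0.
by rewrite (eqP (_ : n - i == 0)) ?dvd1n ?dvdn_mull ?dvdn_exp2l; lia.
Qed.

Section LayerRank.
Local Open Scope group_scope.
Variable p : nat.
Implicit Types gT hT : finGroupType.

Definition layer_rank gT j (G : {group gT}) := logn p #|'Ohm_j.+1(G) : 'Ohm_j(G)|.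

Lemma layer_rankE gT j (G : {group gT}) :
  layer_rank j G = logn p #|'Ohm_j.+1(G)| - logn p #|'Ohm_j(G)|.
Proof. by rewrite /layer_rank -divgS ?Ohm_leq // logn_div ?cardSg ?Ohm_leq. Qed.

Lemma logn_Ohm_sum gT m (G : {group gT}) :
  logn p #|'Ohm_m(G)| = \sum_(j < m) layer_rank j G.
Proof.
elim: m => [|m IHm]; first by rewrite big_ord0 Ohm0 cards1 logn1.
rewrite big_ord_recr /= -IHm layer_rankE subnKC //.
by rewrite dvdn_leq_log ?cardG_gt0 ?cardSg ?Ohm_leq.
Qed.

Lemma layer_rank_isog gT hT j (G : {group gT}) (H : {group hT}) :
  G \isog H -> layer_rank j G = layer_rank j H.
Proof.
by move=> isoGH; rewrite !layer_rankE !(card_isog (isog_Ohm _ isoGH)).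
Qed.

Lemma layer_rank_abelian_type gT j (G : {group gT}) : abelian G ->
  layer_rank j G = count (fun m => j < logn p m) (abelian_type G).
Proof.
move=> cGG; have [b defG <-] := abelian_structure cGG.
by rewrite count_map /layer_rank -(count_logn_dprod_cycle p j defG).
Qed.

Lemma Ohm_abelian_sub gT j (K P : {group gT}) :
  p.-group P -> abelian P -> K \subset P -> 'Ohm_j(K) = K :&: 'Ohm_j(P).
Proof.
move=> pP cPP sKP; have pK := pgroupS sKP pP; have cKK := abelianS sKP cPP.
rewrite !(OhmEabelian (p := p) _ (abelianS (Ohm_sub _ _) _)) //.
apply/setP=> x; rewrite !inE; case Kx: (x \in K) => //=.
by rewrite (subsetP sKP x Kx).
Qed.

Lemma layer_rankS gT j (K P : {group gT}) :
  p.-group P -> abelian P -> K \subset P -> layer_rank j K <= layer_rank j P.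
Proof.
move=> pP cPP sKP; set A := 'Ohm_j.+1(K); set B := 'Ohm_j(P).
have OhmK : 'Ohm_j(K) = A :&: B.
  rewrite /A /B !(Ohm_abelian_sub _ pP cPP sKP) -setIA.
  by rewrite (setIidPr (Ohm_leq _ (leqnSn j))).
have cBA : A \subset 'C(B).
  by rewrite (sub_abelian_cent2 cPP) ?Ohm_sub // (subset_trans (Ohm_sub _ _)).
rewrite /layer_rank OhmK indexgI -indexMg -(cent_joinEr cBA).
rewrite dvdn_leq_log ?indexg_gt0 // indexSg ?joing_subl // join_subG Ohm_leq //.
by rewrite OhmS.
Qed.

Lemma prod_abelian_type gT (G : {group gT}) :
  abelian G -> (\prod_(m <- abelian_type G) m)%N = #|G|.
Proof.
by move=> cGG; have [b defG <-] := abelian_structure cGG; rewrite big_map (bigdprod_card defG).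
Qed.

Lemma logn_nth_abelian_type gT k (G : {group gT}) : abelian G ->
  (k.+1 * logn p (nth 1 (abelian_type G) k) <= logn p #|G|)%N.
Proof.
move=> cGG; set t := abelian_type G.
have [lt_k_t|] := ltnP k (size t); last by move=> ?; rewrite nth_default ?logn1 ?muln0.
have dvd_t : sorted [rel m n | n %| m] t := abelian_type_dvdn_sorted G.
(* t_k divides each of t_0, ..., t_k, whose product divides |G|. *)
rewrite -lognX dvdn_leq_log // -prod_abelian_type // -/t.
rewrite -[in X in _ %| X](cat_take_drop k.+1 t) big_cat /= dvdn_mulr //.
rewrite -[X in (_ ^ X)%N](card_ord k.+1) -prod_nat_const.
rewrite [X in _ %| X](big_nth 1%N) size_takel // big_mkord.
apply: (big_ind2 (fun a b => a %| b)) => [|? ? ? ?|i _]; first exact: dvdnn.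
  exact: dvdn_mul.
have dvd_tr : transitive [rel m n : nat | n %| m].
  by move=> a b c /= ba cb; apply: dvdn_trans cb ba.
have lt_i_t : i < size t := leq_ltn_trans (ltnSE (ltn_ord i)) lt_k_t.
rewrite nth_take //; apply: (sorted_leq_nth dvd_tr dvdnn 1%N dvd_t); rewrite ?inE //.
by rewrite -ltnS.
Qed.

Lemma mem_abelian_type_pgroup gT m (G : {group gT}) :
  p.-group G -> abelian G -> m \in abelian_type G -> exists2 e, 0 < e & m = (p ^ e)%N.
Proof.
move=> pG cGG tm; have /p_natP[e def_m] : p.-nat m.
  by apply: pnat_dvd pG; rewrite -prod_abelian_type // (big_rem m) //= dvdn_mulr.
exists e => //; case: e def_m => // def_m.
by have := allP (abelian_type_gt1 G) m tm; rewrite def_m.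
Qed.

Hypothesis pr_p : prime p.

Lemma eq_layer_rank_isog gT hT (G : {group gT}) (H : {group hT}) :
  p.-group G -> abelian G -> p.-group H -> abelian H ->
  (forall j, layer_rank j G = layer_rank j H) -> G \isog H.
Proof.
move=> pG cGG pH cHH eq_rank; rewrite eq_abelian_type_isog //; apply/eqP.
have logn_type xT (X : {group xT}) : p.-group X -> abelian X ->
    map (expn p) (map (logn p) (abelian_type X)) = abelian_type X
    /\ all (leq 1) (map (logn p) (abelian_type X)).
  move=> pX cXX; rewrite -map_comp all_map; split.
    by apply: map_id_in => m /(mem_abelian_type_pgroup pX cXX)[e _ ->] /=; rewrite pfactorK.
  by apply/allP => m /(mem_abelian_type_pgroup pX cXX)[e e_gt0 ->] /=; rewrite pfactorK.
have [[defG posG] [defH posH]] := (logn_type _ G pG cGG, logn_type _ H pH cHH).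
apply: (sorted_eq (leT := geq)); rewrite ?abelian_type_sorted //.
- by move=> ? ? ? /= ? ?; lia.
- by move=> ? ? /= /andP[? ?]; lia.
rewrite -defG -defH perm_map // perm_eq_count_gtn // => j.
by rewrite !count_map -!layer_rank_abelian_type.
Qed.

End LayerRank.

Section ProductOfCycles.
Variables p n : nat.
Hypothesis pr_p : prime p.
Hypothesis n_gt0 : 0 < n.

Lemma Zp_ppow_cast : (Zp_trunc (p ^ n)).+2 = p ^ n.
Proof. by apply: Zp_cast; rewrite -(expn0 p) ltn_exp2l ?prime_gt1. Qed.

Lemma val_Zp_ppow_add (x y : 'Z_(p ^ n)) : val (x + y)%R = (x + y) %% p ^ n.
Proof. by congr modn; exact: Zp_ppow_cast. Qed.

Lemma val_Zp_ppow_muln (x : 'Z_(p ^ n)) m : val (x *+ m)%R = x * m %% p ^ n.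
Proof. by rewrite Zp_mulrn; congr modn; exact: Zp_ppow_cast. Qed.

(* A copy of the product of the Z/p^(l k)Z inside (Z/p^nZ)^n; Uset p n is
   prod_cyc (fun k => n %/ k.+1). *)
Definition prod_cyc (l : 'I_n -> nat) : {set amb p n} :=
  [set v : amb p n | [forall k, p ^ (n - l k) %| v ord0 k]].

Lemma group_set_prod_cyc l : group_set (prod_cyc l).
Proof.
apply/group_setP; split=> [|v w]; rewrite !inE.
  by apply/forallP=> k; rewrite FinRing.zmod1gE mxE dvdn0.
move=> /forallP dvd_v /forallP dvd_w; apply/forallP=> k.
rewrite FinRing.zmodMgE mxE val_Zp_ppow_add /dvdn modn_dvdm ?dvdn_exp2l ?leq_subr //.
exact: dvdn_add.
Qed.

Canonical prod_cyc_group l := group (group_set_prod_cyc l).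

Lemma card_prod_cyc l : (forall k, l k <= n) -> #|prod_cyc l| = p ^ (\sum_k l k).
Proof.
move=> le_ln; pose F k := [pred x : 'Z_(p ^ n) | p ^ (n - l k) %| x].
pose row_of (g : {ffun 'I_n -> 'Z_(p ^ n)}) : amb p n := (\row_k g k)%R.
have -> : prod_cyc l = row_of @: family F.
  apply/setP=> v; rewrite inE; apply/forallP/imsetP => [dvd_v|[g /familyP Fg ->] k].
    exists [ffun k => v ord0 k]; first by apply/familyP=> k; rewrite ffunE; apply: dvd_v.
    by apply/rowP=> k; rewrite mxE ffunE.
  by rewrite mxE; apply: Fg.
rewrite card_imset => [|g h /rowP eq_gh]; last by apply/ffunP=> k; have := eq_gh k; rewrite !mxE.
rewrite card_family foldrE big_image expn_sum; apply: eq_bigr => k _.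
rewrite /F card_dvdn_ord ?expn_gt0 ?prime_gt0 ?Zp_ppow_cast ?dvdn_exp2l ?leq_subr //.
by rewrite -{1}(subnKC (le_ln k)) expnD mulnK ?expn_gt0 ?prime_gt0.
Qed.

Lemma prod_cyc_pgroup l : (forall k, l k <= n) -> p.-group%g (prod_cyc_group l).
Proof. by move=> le_ln; rewrite /pgroup card_prod_cyc // pnatX pnat_id. Qed.

Lemma prod_cycS l l' : (forall k, l k <= l' k) -> prod_cyc l \subset prod_cyc l'.
Proof.
move=> le_ll'; apply/subsetP=> v; rewrite !inE => /forallP dvd_v; apply/forallP=> k.
by apply: dvdn_trans (dvd_v k); rewrite dvdn_exp2l // leq_sub2l.
Qed.

Lemma expg_pexp_eq1 (v : amb p n) i :
  (v ^+ (p ^ i) == 1)%g = [forall k, p ^ (n - i) %| v ord0 k].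
Proof.
apply/eqP/forallP => [v_pi k | dvd_v].
  have /(congr1 (fun w : amb p n => nat_of_ord (w ord0 k))) := v_pi.
  rewrite FinRing.zmodXgE mulmxnE val_Zp_ppow_muln FinRing.zmod1gE mxE.
  by move/eqP; rewrite -/(dvdn _ _) dvdn_mul_pexp ?prime_gt0.
apply/rowP=> k; apply: val_inj; apply/eqP.
rewrite FinRing.zmodXgE mulmxnE val_Zp_ppow_muln FinRing.zmod1gE mxE.
by rewrite -/(dvdn _ _) dvdn_mul_pexp ?prime_gt0 ?dvd_v.
Qed.

Lemma Ohm_prod_cyc l i : (forall k, l k <= n) ->
  'Ohm_i(prod_cyc_group l)%g = prod_cyc (fun k => minn (l k) i).
Proof.
move=> le_ln; rewrite (OhmEabelian (prod_cyc_pgroup le_ln)) ?FinRing.zmod_abelian //.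
have dvd_min a b x : (p ^ (n - minn a b) %| x) = (p ^ (n - a) %| x) && (p ^ (n - b) %| x).
  wlog le_ab : a b / a <= b => [hyp|].
    by case/orP: (leq_total a b) => /hyp; rewrite // minnC andbC.
  rewrite (minn_idPl le_ab); apply/esym/andb_idr/dvdn_trans.
  by rewrite dvdn_exp2l // leq_sub2l.
apply/setP=> v; rewrite !inE /= expg_pexp_eq1.
apply/andP/forallP => [[/forallP dvd_l /forallP dvd_i] k | dvd_v].
  by rewrite dvd_min dvd_l dvd_i.
by split; apply/forallP=> k; have := dvd_v k; rewrite dvd_min => /andP[].
Qed.

Lemma layer_rank_prod_cyc l j : (forall k, l k <= n) ->
  layer_rank p j (prod_cyc_group l) = \sum_k (j < l k).
Proof.
move=> le_ln; have le_min i k : minn (l k) i <= n := leq_trans (geq_minl _ _) (le_ln k).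
rewrite layer_rankE !Ohm_prod_cyc // !card_prod_cyc // !pfactorK //.
rewrite [X in X - _](eq_bigr (fun k => minn (l k) j + (j < l k))) => [|k _].
  by rewrite big_split /= addKn.
by case: (ltnP j (l k)) => /= ?; lia.
Qed.

End ProductOfCycles.

Lemma fE n : f n = \sum_(k < n) n %/ k.+1.
Proof. by rewrite /f big_add1 /= big_mkord. Qed.

Section Universal.
Variables p n : nat.
Hypothesis pr_p : prime p.
Hypothesis n_gt0 : 0 < n.

Local Notation Ugroup := (prod_cyc_group pr_p n_gt0 (fun k : 'I_n => n %/ k.+1)).

Lemma leq_Uset_exponent (k : 'I_n) : n %/ k.+1 <= n.
Proof. exact: leq_div. Qed.

Lemma card_Uset : #|Uset p n| = p ^ f n.
Proof. by rewrite fE (card_prod_cyc pr_p n_gt0 leq_Uset_exponent). Qed.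

Lemma layer_rank_Uset j : layer_rank p j Ugroup = if j < n then n %/ j.+1 else 0.
Proof.
rewrite (layer_rank_prod_cyc pr_p n_gt0 j leq_Uset_exponent); case: ifP => lt_jn.
  rewrite -[RHS](minn_idPl (leq_div n j.+1)) -sum_ord_ltn; apply: eq_bigr => k _.
  by rewrite !leq_divRL // mulnC.
rewrite big1 // => k _; apply/eqP; rewrite eqb0 -leqNgt.
by apply: leq_trans (leq_div _ _) _; rewrite leqNgt lt_jn.
Qed.

Lemma universal_Uset : universal p n (Uset p n).
Proof.
move=> hT H cHH oH; have pH : p.-group%g H by rewrite /pgroup oH pnatX pnat_id.
have lognH : logn p #|H| = n by rewrite oH pfactorK.
set t := abelian_type H; pose l (k : 'I_n) := logn p (nth 1 t k).
have le_l_div k : l k <= n %/ k.+1.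
  by rewrite leq_divRL // mulnC -[X in _ <= X]lognH logn_nth_abelian_type.
have le_ln k : l k <= n := leq_trans (le_l_div k) (leq_div _ _).
exists (prod_cyc_group pr_p n_gt0 l); split; first exact: prod_cycS.
apply: (eq_layer_rank_isog pr_p) => // [||j].
- exact (prod_cyc_pgroup pr_p n_gt0 le_ln).
- exact: FinRing.zmod_abelian.
- rewrite (layer_rank_prod_cyc pr_p n_gt0 j le_ln) layer_rank_abelian_type //.
  apply: sum_nth_count; first by rewrite /= logn1.
  by rewrite size_abelian_type // (rank_pgroup pH) -[X in _ <= X]lognH p_rank_le_logn.
Qed.

Lemma layer_rank_pcore_universal gT (G : {group gT}) j :
  abelian G -> universal p n G -> j < n -> n %/ j.+1 <= layer_rank p j 'O_p(G)%G.
Proof.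
move=> cGG univG lt_jn; set q := n %/ j.+1.
have q_gt0 : 0 < q by rewrite divn_gt0.
have le_qn : q <= n := leq_div n j.+1.
have le_jq_n : j.+1 * q <= n by rewrite mulnC leq_divM.
(* (Z/p^(j+1))^q, the first factor enlarged by p^(n - (j+1)q) to reach order p^n. *)
pose l (k : 'I_n) := j.+1 * (k < q) + (k < 1) * (n - j.+1 * q).
have le_ln k : l k <= n.
  have le_j_jq : j.+1 <= j.+1 * q by rewrite leq_pmulr.
  by rewrite /l; case: (ltnP k q); case: (ltnP k 1) => /= *; lia.
have card_l : #|prod_cyc_group pr_p n_gt0 l| = p ^ n.
  rewrite (card_prod_cyc pr_p n_gt0 le_ln) big_split /= -big_distrr /= sum_ord_ltn.
  rewrite (eq_bigr (fun k : 'I_n => (n - j.+1 * q) * (k < 1))) => [|k _]; last exact: mulnC.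
  by rewrite -big_distrr /= sum_ord_ltn (minn_idPl le_qn) (minn_idPl n_gt0); congr expn; lia.
have [K [sKG isoK]] := univG _ _ (FinRing.zmod_abelian _) card_l.
have pK : p.-group%g K by rewrite /pgroup (card_isog isoK) card_l pnatX pnat_id.
have sKO : K \subset 'O_p(G)%G by apply: pcore_max pK _; rewrite -sub_abelian_normal.
have := layer_rankS j (pcore_pgroup p G) (abelianS (pcore_sub p G) cGG) sKO.
rewrite (layer_rank_isog _ _ isoK) (layer_rank_prod_cyc pr_p n_gt0 j le_ln); apply: leq_trans.
rewrite -{1}(minn_idPl le_qn) -sum_ord_ltn; apply: leq_sum => k _.
by rewrite /l; case: (ltnP k q) => //= *; lia.
Qed.

Lemma f_le_logn_pcore_universal gT (G : {group gT}) :
  abelian G -> universal p n G -> f n <= logn p #|'O_p(G)%G|.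
Proof.
move=> cGG univG; apply: leq_trans (dvdn_leq_log _ _ (cardSg (Ohm_sub n _))) => //.
rewrite fE logn_Ohm_sum; apply: leq_sum => j _.
exact: layer_rank_pcore_universal.
Qed.

Lemma isog_Uset_extremal gT (P : {group gT}) : p.-group%g P -> abelian P ->
  (forall j, j < n -> n %/ j.+1 <= layer_rank p j P) -> logn p #|P| <= f n ->
  P \isog Uset p n.
Proof.
move=> pP cPP ge_rank le_logP_f.
have := leqif_sum (P := xpredT) (fun (j : 'I_n) _ => leqif_eq (ge_rank j (ltn_ord j))).
rewrite -logn_Ohm_sum -fE => -[le_f_Ohm eq_f_rank].
have le_Ohm_P : logn p #|'Ohm_n(P)%g| <= logn p #|P| by rewrite dvdn_leq_log ?cardSg ?Ohm_sub.
have eq_f_Ohm : f n = logn p #|'Ohm_n(P)%g| by apply/eqP; rewrite eqn_leq le_f_Ohm; lia.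
move: eq_f_rank; rewrite eq_f_Ohm eqxx => /esym/forall_inP eq_rank.
have OhmP : 'Ohm_n(P)%g = P.
  apply/eqP; rewrite eqEcard Ohm_sub (card_pgroup pP) (card_pgroup (pgroupS (Ohm_sub n P) pP)).
  by rewrite leq_exp2l ?prime_gt1 // (leq_trans le_logP_f) ?eq_f_Ohm.
change (P \isog Ugroup); apply: (eq_layer_rank_isog pr_p) => // [||j].
- exact (prod_cyc_pgroup pr_p n_gt0 leq_Uset_exponent).
- exact: FinRing.zmod_abelian.
- rewrite layer_rank_Uset; case: (ltnP j n) => [lt_jn | le_nj].
    exact/esym/eqP/(eq_rank (Ordinal lt_jn)).
  have OhmPj i : n <= i -> 'Ohm_i(P)%g = P.
    by move=> le_ni; apply/eqP; rewrite eqEsubset Ohm_sub -{1}OhmP Ohm_leq.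
  by rewrite /layer_rank !OhmPj ?(leqW le_nj) // indexgg logn1.
Qed.

End Universal.

Unset Implicit Arguments.
Theorem theorem1p5 (p n : nat) (pr_p : prime p) (n_ge1 : (1 <= n)%N) :
  [/\ group_set (Uset p n), abelian (Uset p n), universal p n (Uset p n),
      #|Uset p n| = (p ^ f n)%N &
      forall (gT : finGroupType) (G : {group gT}), abelian G -> universal p n G ->
        (#|Uset p n| <= #|G|)%N /\ (#|G| = #|Uset p n| -> G \isog Uset p n)].
Proof.
split; [exact: group_set_prod_cyc pr_p n_ge1 _ | exact: FinRing.zmod_abelian |
        exact: universal_Uset | exact: card_Uset |].
move=> gT G cGG univG; set P := 'O_p(G)%G.
have pP : p.-group%g P := pcore_pgroup p G.
have le_UP : #|Uset p n| <= #|P|.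
  rewrite (card_Uset pr_p n_ge1) (card_pgroup pP) leq_exp2l ?prime_gt1 //.
  exact: f_le_logn_pcore_universal.
have le_PG : #|P| <= #|G| := subset_leq_card (pcore_sub p G).
split=> [|eq_GU]; first exact: leq_trans le_UP le_PG.
have eq_PG : P :=: G by apply/eqP; rewrite eqEcard pcore_sub eq_GU.
rewrite -eq_PG; apply: (isog_Uset_extremal pr_p n_ge1) => //.
- exact: abelianS (pcore_sub p G) cGG.
- by move=> j; apply: layer_rank_pcore_universal.
- by rewrite eq_PG eq_GU (card_Uset pr_p n_ge1) pfactorK.
Qed.
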